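(* Let $T$ be an unrooted phylogenetic tree with leaf set $[n]$, $n\ge 2$, and non-negative edge lengths $l(e)$. Define $\varphi_{Pa}(i)=\sum_e \mu(i,e)\,l(e)$, the sum running over all edges of $T$. Then for every leaf $i$, $$\varphi_{Pa}(i)=\frac12\sum_{j\in[n],\,j\ne i}\lambda_{ij}\,d(i,j),$$ where $\lambda_{ij}=\prod_{v\in I(T;i,j)}\frac1{d(v)-1}$ and $d(i,j)$ is the sum of the edge lengths on the path between leaves $i$ and $j$. Moreover, $\sum_{i\in[n]}\varphi_{Pa}(i)=\sum_e l(e)$.
   Context: An unrooted phylogenetic tree on $[n]$ is an unrooted tree with leaf set $[n]$ whose non-leaf vertices are unlabelled and have degree at least 3. $d(v)$ denotes the degree of vertex $v$. For a leaf $i$ and an edge $e$, $I(T;i,e)$ is the set of interior vertices on the path from $i$ to $e$, including the endpoint of $e$ reached first from $i$ (if interior) but not the other endpoint. Then $\mu(i,e)=\frac12\prod_{v\in I(T;i,e)}\frac1{d(v)-1}$, with the empty product equal to 1. For leaves $i\ne j$, $I(T;i,j)$ is the set of interior vertices on the path from $i$ to $j$. *)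

From HB Require Import structures.
From mathcomp Require Import all_boot all_order all_algebra.
Set Implicit Arguments. Unset Strict Implicit. Unset Printing Implicit Defensive.
Import Order.TTheory GRing.Theory Num.Theory.

Section Phylo.
Variables (V : finType) (adj : rel V).

Definition is_spath (x y : V) (p : seq V) : bool :=
  [&& path adj x p, last x p == y & uniq (x :: p)].

(* v lies on the (simple) path from x to y.  Simple paths have at most
   #|V| vertices, so quantifying over tuples of length < #|V| is exhaustive. *)
Definition on_path (x y v : V) : bool :=
  [exists k : 'I_#|V|, [exists p : k.-tuple V,
     is_spath x y p && (v \in x :: (p : seq V))]].

Definition edge_on_path (x y : V) (e : {set V}) : bool :=
  [exists k : 'I_#|V|, [exists p : k.-tuple V,
     is_spath x y p &&
     (e \in [seq [set u.1; u.2] | u <- zip (x :: (p : seq V)) p])]].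

Definition edges : {set {set V}} :=
  [set e : {set V} | [exists a, [exists b, adj a b && (e == [set a; b])]]].

Definition deg (v : V) : nat := #|[set w | adj v w]|.

Definition is_tree : Prop :=
  [/\ symmetric adj, irreflexive adj,
      (forall x y : V, connect adj x y) &
      (forall (x y : V) (p q : seq V), is_spath x y p -> is_spath x y q -> p = q)].

Variable n : nat.
Variable leaf : 'I_n -> V.

Definition is_phylo_tree : Prop :=
  [/\ is_tree, injective leaf,
      (forall i, deg (leaf i) = 1%N) &
      (forall v, v \notin codom leaf -> (3 <= deg v)%N)].

Definition interior (v : V) : bool := v \notin codom leaf.

Variable R : realFieldType.
Local Open Scope ring_scope.

(* I(T;i,e) : interior vertices on the path from leaf i to the endpoint a of e
   reached first from i (i.e. the other endpoint is not on the path to a) *)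
Definition I_edge (i : 'I_n) (e : {set V}) : {set V} :=
  [set v | interior v &&
     [exists a in e, on_path (leaf i) a v &&
        [forall b in e, on_path (leaf i) a b ==> (b == a)]]].

Definition I_leaves (i j : 'I_n) : {set V} :=
  [set v | interior v && on_path (leaf i) (leaf j) v].

Definition mu (i : 'I_n) (e : {set V}) : R :=
  2^-1 * \prod_(v in I_edge i e) ((deg v).-1)%:R^-1.

Definition lambda (i j : 'I_n) : R :=
  \prod_(v in I_leaves i j) ((deg v).-1)%:R^-1.

Variable l : {set V} -> R.

Definition leaf_dist (i j : 'I_n) : R :=
  \sum_(e in edges | edge_on_path (leaf i) (leaf j) e) l e.

Definition phiPa (i : 'I_n) : R := \sum_(e in edges) mu i e * l e.

End Phylo.

From HB Require Import structures.
From mathcomp Require Import all_boot all_order all_algebra.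
From mathcomp Require Import zify.
Import Order.TTheory GRing.Theory Num.Theory.
Set Implicit Arguments. Unset Strict Implicit. Unset Printing Implicit Defensive.

(* Root the tree at a vertex r and let a unit of mass sitting at a vertex u
   flow away from r, an interior vertex splitting what it receives equally
   among its (deg - 1) children.  The amount reaching a leaf w is the product
   of the weights 1/(deg v - 1) of the interior vertices on the path from u to
   w, and since nothing is lost, these amounts sum to 1 over the leaves below u.
   For an edge e = ab with a on the side of leaf i, lambda_ij factors as the
   product along the path from i to a times the amount reaching j from b; as
   the path from i to j contains e exactly when j lies below b, summing over j
   gives 2 mu(i,e).  Summing mu(i,e) over i instead adds the masses reaching
   the leaves on the two sides of e, which gives 1/2 + 1/2. *)

Lemma mem_zip_pair (T : eqType) (s t : seq T) (u : T * T) :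
  u \in zip s t -> (u.1 \in s) && (u.2 \in t).
Proof.
elim: s t => [|x s IH] [|y t] //= /predU1P [-> | /IH /andP [h1 h2]].
  by rewrite !mem_head.
by rewrite !inE h1 h2 !orbT.
Qed.

Lemma mem_zip_last (T : eqType) (x b : T) s q :
  (last x s, b) \in zip (x :: s ++ b :: q) (s ++ b :: q).
Proof.
elim: s x => [|y s IH] x /=; first by rewrite mem_head.
by rewrite inE IH orbT.
Qed.

Lemma last_rev_belast (T : eqType) (x y : T) s :
  last x s = y -> last y (rev (belast x s)) = x.
Proof. by case: s => [|c q] /= E; rewrite ?E // rev_cons last_rcons. Qed.

Section TreePath.
Variables (V : finType) (adj : rel V).
Hypothesis adj_sym : symmetric adj.
Hypothesis adj_irr : irreflexive adj.
Hypothesis adj_connected : forall x y, connect adj x y.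
Hypothesis spath_unique :
  forall x y p q, is_spath adj x y p -> is_spath adj x y q -> p = q.

Lemma exists_spath x y : exists p, is_spath adj x y p.
Proof.
have /connectP [p pp ->] := adj_connected x y.
case: (shortenP pp) => p' pp' up' _.
by exists p'; rewrite /is_spath pp' eqxx up'.
Qed.

Definition tree_path x y := xchoose (exists_spath x y).

Lemma tree_pathP x y : is_spath adj x y (tree_path x y).
Proof. exact: xchooseP. Qed.

Lemma tree_path_unique x y p : is_spath adj x y p -> p = tree_path x y.
Proof. by move=> h; apply: spath_unique h (tree_pathP x y). Qed.

Lemma path_tree_path x y : path adj x (tree_path x y).
Proof. by case/and3P: (tree_pathP x y). Qed.

Lemma last_tree_path x y : last x (tree_path x y) = y.
Proof. by case/and3P: (tree_pathP x y) => _ /eqP. Qed.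

Lemma uniq_tree_path x y : uniq (x :: tree_path x y).
Proof. by case/and3P: (tree_pathP x y). Qed.

Lemma mem_tree_path_last x y : y \in x :: tree_path x y.
Proof. by rewrite -{1}(last_tree_path x y) mem_last. Qed.

Lemma tree_path_id x : tree_path x x = [::].
Proof. by symmetry; apply: tree_path_unique; rewrite /is_spath /= eqxx. Qed.

Lemma adj_neq a b : adj a b -> a != b.
Proof. by apply: contraTneq => ->; rewrite adj_irr. Qed.

Lemma tree_path_adj a b : adj a b -> tree_path a b = [:: b].
Proof.
move=> hab; symmetry; apply: tree_path_unique.
by rewrite /is_spath /= hab eqxx inE (adj_neq hab).
Qed.

Lemma tree_path_cons x w c q :
  tree_path x w = c :: q -> adj x c /\ q = tree_path c w.
Proof.
move=> E; have := tree_pathP x w.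
rewrite E /is_spath /= => /and3P [/andP [hxc pq] lq /andP [_ uq]].
by split=> //; apply: tree_path_unique; rewrite /is_spath pq lq /= uq.
Qed.

Lemma tree_path_split x y z :
  z \in x :: tree_path x y -> tree_path x y = tree_path x z ++ tree_path z y.
Proof.
move=> hz; have := tree_pathP x y; move: hz; move: (tree_path x y) => s.
case/splitPl=> p1 p2 Hl.
rewrite /is_spath cat_path last_cat -cat_cons cat_uniq.
move=> /and3P [/andP [h1 h2] hl /and3P [u1 dis u2]].
have -> : p1 = tree_path x z by apply: tree_path_unique; rewrite /is_spath h1 Hl eqxx u1.
have -> // : p2 = tree_path z y.
apply: tree_path_unique; rewrite /is_spath -Hl h2 hl /= u2 andbT.
by apply: contra dis => hz; apply/hasP; exists (last x p1); rewrite ?mem_last.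
Qed.

Lemma tree_path_cat x z y :
  uniq (x :: tree_path x z ++ tree_path z y) ->
  tree_path x y = tree_path x z ++ tree_path z y.
Proof.
move=> u; symmetry; apply: tree_path_unique.
rewrite /is_spath cat_path path_tree_path last_tree_path path_tree_path.
by rewrite last_cat !last_tree_path eqxx u.
Qed.

Lemma size_tree_path x y : size (tree_path x y) < #|V|.
Proof.
have := max_card (mem (x :: tree_path x y)).
by rewrite (card_uniqP (uniq_tree_path x y)).
Qed.

Lemma tree_path_sym x y : x :: tree_path x y =i y :: tree_path y x.
Proof.
have pe : perm_eq (y :: rev (belast x (tree_path x y))) (x :: tree_path x y).
  by rewrite [x :: _]lastI last_tree_path -rev_rcons perm_rev.
suff -> : tree_path y x = rev (belast x (tree_path x y)).
  by move=> z; rewrite (perm_mem pe).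
symmetry; apply: tree_path_unique.
rewrite /is_spath (perm_uniq pe) uniq_tree_path andbT.
rewrite last_rev_belast ?last_tree_path // eqxx andbT.
rewrite -{1}(last_tree_path x y) rev_path.
by apply: sub_path (path_tree_path x y) => a b; rewrite adj_sym.
Qed.

Lemma exists_spath_tupleE x y (Q : pred (seq V)) :
  [exists k : 'I_#|V|, [exists p : k.-tuple V, is_spath adj x y p && Q p]] =
  Q (tree_path x y).
Proof.
apply/idP/idP => [/existsP [k /existsP [p /andP [h q]]]|q].
  by rewrite -(tree_path_unique h).
apply/existsP; exists (Ordinal (size_tree_path x y)).
by apply/existsP; exists (in_tuple (tree_path x y)); rewrite /= tree_pathP q.
Qed.

Lemma on_pathE x y v : on_path adj x y v = (v \in x :: tree_path x y).
Proof. exact: (exists_spath_tupleE x y (fun p => v \in x :: p)). Qed.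

Lemma edge_on_pathE x y e : edge_on_path adj x y e =
  (e \in [seq [set u.1; u.2] | u <- zip (x :: tree_path x y) (tree_path x y)]).
Proof.
exact: (exists_spath_tupleE x y
          (fun p => e \in [seq [set u.1; u.2] | u <- zip (x :: p) p])).
Qed.

Section Rooted.
Variable r : V.

Definition subtree u := [set w | u \in r :: tree_path r w].
Definition children u := [set c | adj u c && (u \in r :: tree_path r c)].

Lemma child_tree_path a b :
  adj a b -> a \in r :: tree_path r b -> tree_path r b = tree_path r a ++ [:: b].
Proof. by move=> hab h; rewrite {1}(tree_path_split h) (tree_path_adj hab). Qed.

Lemma parent_on_tree_path a b :
  adj a b -> a \notin r :: tree_path r b -> b \in r :: tree_path r a.
Proof.
move=> hab h; have hba : adj b a by rewrite adj_sym.
have -> : tree_path r a = tree_path r b ++ [:: a].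
  rewrite -(tree_path_adj hba); apply: tree_path_cat.
  by rewrite (tree_path_adj hba) -cat_cons cat_uniq uniq_tree_path /= orbF h.
by rewrite -cat_cons mem_cat mem_tree_path_last.
Qed.

Lemma on_tree_path_anti a b :
  a != b -> a \in r :: tree_path r b -> b \in r :: tree_path r a -> False.
Proof.
move=> nab /tree_path_split Eb /tree_path_split Ea.
have := congr1 size Eb; rewrite Ea !size_cat -addnA => /eqP.
rewrite -{1}(addn0 (size _)) eqn_add2l eq_sym addn_eq0 size_eq0 => /andP [/eqP E _].
by move: (last_tree_path b a) nab; rewrite E /= => ->; rewrite eqxx.
Qed.

Lemma edge_orient e : e \in edges adj ->
  exists a b, [/\ adj a b, a \in r :: tree_path r b & e = [set a; b]].
Proof.
rewrite inE => /existsP [a /existsP [b /andP [hab /eqP ->]]].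
case: (boolP (a \in r :: tree_path r b)) => h; first by exists a, b.
exists b, a; split; first by rewrite adj_sym.
  exact: parent_on_tree_path.
by rewrite setUC.
Qed.

Lemma edge_on_path_oriented w a b : adj a b -> a \in r :: tree_path r b ->
  edge_on_path adj r w [set a; b] = (b \in r :: tree_path r w).
Proof.
move=> hab ha; rewrite edge_on_pathE; apply/mapP/idP => [[u hu E]|hb].
  have /andP [h1 h2] := mem_zip_pair hu.
  have : b \in [set u.1; u.2] by rewrite -E set22.
  by case/set2P => -> //; rewrite inE h2 orbT.
exists (a, b) => //.
rewrite (tree_path_split hb) (child_tree_path hab ha) -catA /=.
by have := mem_zip_last r b (tree_path r a) (tree_path b w); rewrite last_tree_path.
Qed.

Lemma subtree_refl u : u \in subtree u.
Proof. by rewrite inE mem_tree_path_last. Qed.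

Lemma subtree_child w u :
  w \in subtree u -> w != u -> exists2 c, c \in children u & w \in subtree c.
Proof.
rewrite inE => hw nwu.
have E := tree_path_split hw.
case E2 : (tree_path u w) => [|c q].
  by move: (last_tree_path u w) nwu; rewrite E2 /= => ->; rewrite eqxx.
have [huc _] := tree_path_cons E2.
exists c; last by rewrite inE E E2 -cat_cons mem_cat mem_head orbT.
rewrite inE huc /=; apply: contraT => hn.
have := uniq_tree_path r w; rewrite E E2 -cat_cons cat_uniq => /and3P [_ /hasPn H _].
by have := H c (mem_head _ _); rewrite /= (parent_on_tree_path huc hn).
Qed.

Lemma subtree_of_child u c w : c \in children u -> w \in subtree c ->
  w \in subtree u /\ tree_path u w = c :: tree_path c w.
Proof.
rewrite !inE => /andP [huc hc] hw.
have E : tree_path r w = tree_path r u ++ c :: tree_path c w.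
  by rewrite (tree_path_split hw) (child_tree_path huc hc) -catA.
have hu : u \in r :: tree_path r w.
  by rewrite E -cat_cons mem_cat mem_tree_path_last.
split=> //; move: E; rewrite (tree_path_split hu) => /(congr1 (drop (size (tree_path r u)))).
by rewrite !drop_size_cat.
Qed.

Lemma child_notin_subtree u c : c \in children u -> u \notin subtree c.
Proof.
rewrite !inE => /andP [huc hc]; apply/negP => h.
exact: (on_tree_path_anti (adj_neq huc) hc h).
Qed.

Lemma size_tree_path_child u c :
  c \in children u -> size (tree_path r c) = (size (tree_path r u)).+1.
Proof.
by rewrite inE => /andP [huc hc]; rewrite (child_tree_path huc hc) size_cat addn1.
Qed.

Lemma child_neq_root u c : c \in children u -> c != r.
Proof.
by move=> /size_tree_path_child; apply: contra_eqN => /eqP ->; rewrite tree_path_id.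
Qed.

Lemma card_children u : u != r -> #|children u| = (deg adj u).-1.
Proof.
move=> nur.
case E : (tree_path u r) => [|p q].
  by move: (last_tree_path u r) nur; rewrite E /= => ->; rewrite eqxx.
have [hup Eq] := tree_path_cons E.
suff -> : children u = [set w | adj u w] :\ p.
  by rewrite /deg (cardsD1 p [set w | adj u w]) inE hup.
apply/setP => c; rewrite !inE.
case hc : (adj u c); rewrite ?andbF ?andbT //=.
have [->|ncp] /= := eqVneq c p.
  rewrite -in_cons (tree_path_sym r p u) -Eq.
  by have := uniq_tree_path u r; rewrite E cons_uniq => /andP [/negPf ->].
apply: contraTT ncp; rewrite -in_cons => /(parent_on_tree_path hc).
rewrite tree_path_sym => /tree_path_split; rewrite (tree_path_adj hc) E.
by case=> ->; rewrite eqxx.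
Qed.

End Rooted.

Section LeafWeights.
Variables (n : nat) (leaf : 'I_n -> V).
Hypothesis leaf_inj : injective leaf.
Hypothesis deg_leaf : forall i, deg adj (leaf i) = 1%N.
Hypothesis deg_interior : forall v, v \notin codom leaf -> (3 <= deg adj v)%N.
Variable R : realFieldType.
Local Open Scope ring_scope.

Definition weight (v : V) : R :=
  if interior leaf v then ((deg adj v).-1)%:R^-1 else 1.

Definition flow u w := \prod_(v <- u :: tree_path u w) weight v.

Lemma weight_leaf j : weight (leaf j) = 1.
Proof. by rewrite /weight /interior codom_f. Qed.

Lemma sum_eq_leaf u : \sum_(j < n) ((leaf j == u)%:R : R) = (u \in codom leaf)%:R.
Proof.
have [/codomP [j0 ->]|hu] := boolP (u \in codom leaf).
  rewrite (bigD1 j0) //= eqxx big1 ?addr0 // => j nj.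
  by rewrite (inj_eq leaf_inj) (negPf nj).
by rewrite big1 // => j _; case: eqP => // E; rewrite -E codom_f in hu.
Qed.

Lemma weight_children r u : u != r ->
  weight u * ((u \in codom leaf)%:R + #|children r u|%:R) = 1.
Proof.
move=> nur; rewrite card_children //.
have [/codomP [j ->]|hu] := boolP (u \in codom leaf).
  by rewrite weight_leaf deg_leaf addr0 mul1r.
rewrite add0r /weight /interior hu mulVf // pnatr_eq0 -lt0n.
by have := deg_interior hu; case: (deg adj u) => [|[|[|k]]].
Qed.

Lemma flow_subtreeE r u w :
  (if w \in subtree r u then flow u w else 0) =
  weight u * ((w == u)%:R + \sum_(c in children r u | w \in subtree r c) flow c w).
Proof.
have [->|nwu] := eqVneq w u.
  rewrite subtree_refl /flow tree_path_id big_seq1 big1 ?addr0 ?mulr1 // => c.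
  by case/andP => /child_notin_subtree/negPf ->.
rewrite add0r; case: ifP => hw; last first.
  rewrite big1 ?mulr0 // => c /andP [hc hwc].
  by move: (subtree_of_child hc hwc).1; rewrite hw.
have [c0 hc0 hw0] := subtree_child hw nwu.
have E0 := (subtree_of_child hc0 hw0).2.
rewrite (big_pred1 c0) => [|c /=]; first by rewrite /flow E0 big_cons.
apply/andP/eqP => [[hc hwc]|->] //.
by move: (subtree_of_child hc hwc).2; rewrite E0 => -[].
Qed.

Lemma sum_flow_children r u : u != r ->
  (forall c, c \in children r u ->
     \sum_(j < n | leaf j \in subtree r c) flow c (leaf j) = 1) ->
  \sum_(j < n | leaf j \in subtree r u) flow u (leaf j) = 1.
Proof.
move=> nur IH.
rewrite big_mkcond (eq_bigr _ (fun j _ => flow_subtreeE r u (leaf j))) /=.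
rewrite -big_distrr big_split /= sum_eq_leaf.
rewrite (exchange_big_dep (mem (children r u))) /=; last by move=> j c _ /andP [].
rewrite -[RHS](weight_children (r := r) nur) -sumr_const; congr (_ * (_ + _)).
apply: eq_bigr => c hc; rewrite -(IH c hc); apply: eq_bigl => j.
by rewrite hc.
Qed.

Lemma sum_flow_subtree r u : u != r ->
  \sum_(j < n | leaf j \in subtree r u) flow u (leaf j) = 1.
Proof.
move=> nur; have [k] := ubnP (#|V| - size (tree_path r u)).
elim: k u nur => // k IHk u nur hk.
apply: sum_flow_children => // c hc; apply: IHk; first exact: child_neq_root hc.
by have := size_tree_path r c; rewrite (size_tree_path_child hc); lia.
Qed.

Lemma prod_interior_inv s : uniq s ->
  \prod_(v in [set v | interior leaf v && (v \in s)]) ((deg adj v).-1)%:R^-1 =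
  \prod_(v <- s) weight v.
Proof.
move=> us; rewrite big_uniq // big_mkcond [RHS]big_mkcond; apply: eq_bigr => v _.
by rewrite inE /weight; case: (interior leaf v); case: (v \in s).
Qed.

Lemma I_edge_oriented i a b :
  adj a b -> a \in leaf i :: tree_path (leaf i) b ->
  I_edge adj leaf i [set a; b] =
  [set v | interior leaf v && (v \in leaf i :: tree_path (leaf i) a)].
Proof.
move=> hab ha; apply/setP => v; rewrite !in_set; congr (_ && _).
apply/existsP/idP => [[a0 /and3P [ha0 hv /forallP hall]]|hv].
  case/set2P: ha0 => E; first by rewrite -E -on_pathE.
  have /implyP := hall a; rewrite E set21 on_pathE ha => /(_ isT)/eqP ab.
  by move: (adj_neq hab); rewrite ab eqxx.
exists a; rewrite set21 on_pathE hv /=.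
apply/forallP => b0; apply/implyP => /set2P [->|->]; first by rewrite eqxx implybT.
apply/implyP; rewrite on_pathE => hb.
by case: (on_tree_path_anti (adj_neq hab) ha hb).
Qed.

Lemma lambda_split i j a b : adj a b -> a \in leaf i :: tree_path (leaf i) b ->
  b \in leaf i :: tree_path (leaf i) (leaf j) ->
  lambda adj leaf R i j =
  (\prod_(v <- leaf i :: tree_path (leaf i) a) weight v) * flow b (leaf j).
Proof.
move=> hab ha hb; rewrite /lambda.
have -> : I_leaves adj leaf i j =
    [set v | interior leaf v && (v \in leaf i :: tree_path (leaf i) (leaf j))].
  by apply/setP => v; rewrite !inE on_pathE.
rewrite prod_interior_inv ?uniq_tree_path // (tree_path_split hb).
by rewrite (child_tree_path hab ha) -catA -cat_cons big_cat.
Qed.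

Lemma mu_sum_lambda i e : e \in edges adj ->
  mu adj leaf R i e =
  2^-1 * \sum_(j < n | (j != i) && edge_on_path adj (leaf i) (leaf j) e)
           lambda adj leaf R i j.
Proof.
move=> he; have [a [b [hab ha ->]]] := edge_orient (leaf i) he.
have nbi : b != leaf i by apply: (@child_neq_root (leaf i) a); rewrite inE hab ha.
rewrite /mu (I_edge_oriented hab ha) prod_interior_inv ?uniq_tree_path //.
congr (_ * _); rewrite -[LHS]mulr1 -[X in _ * X](sum_flow_subtree nbi) big_distrr /=.
apply: eq_big => [j|j]; rewrite in_set.
  rewrite (edge_on_path_oriented _ hab ha); case: (eqVneq j i) => // ->.
  by rewrite tree_path_id mem_seq1 (negPf nbi).
by move=> hb; rewrite (lambda_split hab ha hb).
Qed.

Lemma sum_mu_oriented a b : adj a b ->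
  \sum_(i < n | a \in leaf i :: tree_path (leaf i) b)
     \prod_(v in I_edge adj leaf i [set a; b]) ((deg adj v).-1)%:R^-1 = 1 :> R.
Proof.
move=> hab; rewrite -[RHS](@sum_flow_subtree b a) ?adj_neq //.
apply: eq_big => [i|i hi]; first by rewrite in_set tree_path_sym.
rewrite (I_edge_oriented hab hi) prod_interior_inv ?uniq_tree_path //.
apply: perm_big; apply: uniq_perm; rewrite ?uniq_tree_path //.
by move=> v; rewrite -tree_path_sym.
Qed.

Lemma sum_mu e : e \in edges adj -> \sum_(i < n) mu adj leaf R i e = 1.
Proof.
rewrite inE => /existsP [a /existsP [b /andP [hab /eqP ->]]].
have hba : adj b a by rewrite adj_sym.
rewrite /mu -big_distrr /= (bigID (fun i => a \in leaf i :: tree_path (leaf i) b)) /=.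
rewrite sum_mu_oriented // -[in X in _ * (_ + X)]setUC.
rewrite (eq_bigl (fun i => b \in leaf i :: tree_path (leaf i) a)) => [|i].
  by rewrite sum_mu_oriented // mulVf // pnatr_eq0.
apply/idP/idP => [/(parent_on_tree_path hab)//|hb]; apply/negP => ha.
exact: (on_tree_path_anti (adj_neq hab) ha hb).
Qed.

End LeafWeights.
End TreePath.

Local Open Scope ring_scope.

Theorem theorem9 (R : realFieldType) (n : nat) (V : finType) (adj : rel V)
    (leaf : 'I_n -> V) (l : {set V} -> R) :
  (2 <= n)%N ->
  is_phylo_tree adj leaf ->
  (forall e, e \in edges adj -> 0 <= l e) ->
  (forall i : 'I_n,
     phiPa adj leaf l i =
     2^-1 * \sum_(j < n | j != i) lambda adj leaf R i j * leaf_dist adj leaf l i j)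
  /\ \sum_(i < n) phiPa adj leaf l i = \sum_(e in edges adj) l e.
Proof.
move=> _ [[sym irr conn uniq_p] inj deg1 deg3] _.
have mu_lambda := mu_sum_lambda sym irr conn uniq_p inj deg1 deg3.
have mu_sum := sum_mu sym irr conn uniq_p inj deg1 deg3.
split=> [i|]; rewrite /phiPa.
  under eq_bigr => e he do rewrite mu_lambda // -mulrA big_distrl.
  rewrite -big_distrr /= (exchange_big_dep (fun j => j != i)) => [|e j _ /andP []//].
  congr (_ * _); apply: eq_bigr => j ji; rewrite /leaf_dist big_distrr /=.
  by apply: eq_bigl => e; rewrite ji.
rewrite exchange_big /=; apply: eq_bigr => e he.
by rewrite -big_distrl /= mu_sum ?mul1r.
Qed.
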